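(* For every $n\ge2$, $|QB(n)|\le\lfloor\log_2 n\rfloor$.
   Context: Bifurcating trees: rooted trees in which every internal node has exactly two children; $\mathcal{T}_n$ is the set of isomorphism classes of bifurcating trees with $n$ leaves. The Colless index is $\mathcal{C}(T)=\sum_{v}|\kappa_T(v_1)-\kappa_T(v_2)|$, summed over internal nodes $v$ with children $v_1,v_2$, where $\kappa_T(w)$ is the number of leaves descending from $w$; $c_n=\min\{\mathcal{C}(T):T\in\mathcal{T}_n\}$. For $n\ge2$, $QB(n)=\{(n_a,n_b)\in\mathbb{N}^2: n_a\ge n_b\ge1,\ n_a+n_b=n,\ c_{n_a}+c_{n_b}+n_a-n_b=c_n\}$. *)

From Stdlib Require Import ClassicalDescription.
From mathcomp Require Import all_boot.
Set Implicit Arguments. Unset Strict Implicit. Unset Printing Implicit Defensive.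

(* Rooted bifurcating trees (as plane trees; the Colless index and leaf count
   are invariant under isomorphism, so minimizing over all trees equals
   minimizing over isomorphism classes). *)
Inductive btree : Type := Leaf | Node of btree & btree.

Fixpoint leaves (T : btree) : nat :=
  match T with Leaf => 1 | Node a b => leaves a + leaves b end.

Definition absdiff (m n : nat) : nat := (m - n) + (n - m).

Fixpoint colless (T : btree) : nat :=
  match T with
  | Leaf => 0
  | Node a b => colless a + colless b + absdiff (leaves a) (leaves b)
  end.

Fixpoint caterpillar (k : nat) : btree :=
  match k with 0 => Leaf | k'.+1 => Node (caterpillar k') Leaf end.

Lemma leaves_caterpillar k : leaves (caterpillar k) = k.+1.
Proof. by elim: k => //= k ->; rewrite addn1. Qed.

Definition colless_attained (n k : nat) : bool :=
  if excluded_middle_informative (exists T, leaves T = n /\ colless T = k)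
  then true else false.

Lemma colless_attained_ex n : exists k, colless_attained n.+1 k.
Proof.
exists (colless (caterpillar n)); rewrite /colless_attained.
case: excluded_middle_informative => // H; exfalso; apply: H.
by exists (caterpillar n); rewrite leaves_caterpillar.
Qed.

(* c_n = min { C(T) : T has n leaves }, for n >= 1 (c_0 := 0, unused) *)
Definition cmin (n : nat) : nat :=
  match n with 0 => 0 | n'.+1 => ex_minn (colless_attained_ex n') end.

(* QB(n) = {(n_a, n_b) : n_a >= n_b >= 1, n_a + n_b = n,
            c_{n_a} + c_{n_b} + n_a - n_b = c_n};
   components are bounded by n since n_a + n_b = n. *)
Definition QB (n : nat) : {set 'I_n.+1 * 'I_n.+1} :=
  [set p : 'I_n.+1 * 'I_n.+1 |
    let na := nat_of_ord p.1 in let nb := nat_of_ord p.2 in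
    [&& nb <= na, 1 <= nb, na + nb == n &
        cmin na + cmin nb + (na - nb) == cmin n]].

From Stdlib Require Import ClassicalDescription.
From mathcomp Require Import all_boot zify.
Set Implicit Arguments. Unset Strict Implicit. Unset Printing Implicit Defensive.

(* 1. The minimal Colless index satisfies c_1 = 0 and, for n >= 2,
      c_n = c_{ceil(n/2)} + c_{floor(n/2)} + (n mod 2) (the maximally balanced
      tree is optimal).  We define this recursion as [mincol] and show
      [mincol (a + b) <= split_cost a b := mincol a + mincol b + |a - b|] by
      strong induction on a + b, using parity identities for [mincol] and for
      [split_cost]; the balanced tree attains [mincol], so [cmin = mincol].
   2. Call a split (a, b) tight when equality holds.  Tightness of a split of
      an even or odd number forces tightness of splits of roughly half of it,
      and two odd parts can only be tight when they are equal.
   3. Hence the smaller parts of the tight splits of n ([small_parts n]) map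
      injectively, up to one extra element, into the corresponding set for
      n/2 (directly for even n, via the auxiliary family [twin_tight] for odd
      n).  Each halving step adds at most one element, which gives the bound
      trunc_log 2 n.  Finally QB(n) injects into [small_parts n]. *)

(* The balanced-tree recursion for c_n, computed with fuel [k]; fuel [n]
   suffices, since both recursive arguments are smaller than [n]. *)
Fixpoint mincol_fuel (k n : nat) : nat :=
  if k is k'.+1 then
    (if n <= 1 then 0
     else mincol_fuel k' (uphalf n) + mincol_fuel k' n./2 + odd n)
  else 0.

Definition mincol (n : nat) : nat := mincol_fuel n n.

Lemma mincol_fuel_enough k1 k2 n :
  n <= k1 -> n <= k2 -> mincol_fuel k1 n = mincol_fuel k2 n.
Proof.
elim: k1 k2 n => [|k1 IH] [|k2] n //= h1 h2; try by case: n h1 h2.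
case: ifP => // n_gt1.
by rewrite (IH k2 (uphalf n)) ?(IH k2 n./2) ?uphalf_half; lia.
Qed.

Lemma mincol0 : mincol 0 = 0. Proof. by []. Qed.
Lemma mincol1 : mincol 1 = 0. Proof. by []. Qed.

Lemma mincol_rec n :
  1 < n -> mincol n = mincol (uphalf n) + mincol n./2 + odd n.
Proof.
case: n => [//|n] n_gt1; rewrite /mincol /= leqNgt n_gt1 /=.
by rewrite (@mincol_fuel_enough n (uphalf n.+1))
  ?(@mincol_fuel_enough n n.+1./2) //= ?uphalf_half; lia.
Qed.

Lemma mincol_double m : mincol m.*2 = (mincol m).*2.
Proof.
case: m => [//|m]; rewrite mincol_rec; last by rewrite doubleS.
by rewrite uphalf_double half_double odd_double addn0 addnn.
Qed.

Lemma mincol_odd m : 0 < m -> mincol m.*2.+1 = mincol m + mincol m.+1 + 1.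
Proof.
move=> m_gt0; rewrite mincol_rec /= ?uphalf_double ?half_double ?odd_double; lia.
Qed.

Lemma halfP n : exists x, n = x.*2 \/ n = x.*2.+1.
Proof. by exists n./2; case: (boolP (odd n)) => n_odd; [right|left]; lia. Qed.

(* Adding one leaf next to a tree with b leaves: c_{b+1} <= c_b + (b - 1). *)
Lemma mincol_succ b : 0 < b -> (mincol b.+1).+1 <= mincol b + b.
Proof.
elim/ltn_ind: b => b IH b_gt0; have [y [b_even|b_odd]] := halfP b; subst b.
- have y_gt0 : 0 < y by lia.
  have := IH y ltac:(lia) y_gt0.
  rewrite mincol_odd // mincol_double; lia.
- case: (posnP y) => [->//|y_gt0].
  have := IH y ltac:(lia) y_gt0.
  rewrite -doubleS mincol_double mincol_odd //; lia.
Qed.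

(* For b >= 3 the previous inequality is strict; this rules out tight
   splits with a part equal to 1 (see [tight_1]). *)
Lemma mincol_succ_strict b : 2 < b -> (mincol b.+1).+2 <= mincol b + b.
Proof.
move=> b_gt2; have [y [b_even|b_odd]] := halfP b; subst b.
- have y_gt0 : 0 < y by lia.
  have := mincol_succ y_gt0; rewrite mincol_odd // mincol_double; lia.
- have y_gt0 : 0 < y by lia.
  have := mincol_succ y_gt0; rewrite -doubleS mincol_double mincol_odd //; lia.
Qed.

Definition split_cost (a b : nat) : nat := mincol a + mincol b + absdiff a b.

Lemma split_costC a b : split_cost a b = split_cost b a.
Proof. rewrite /split_cost /absdiff; lia. Qed.

Lemma split_cost0 b : split_cost 0 b = mincol b + b.
Proof. by rewrite /split_cost /absdiff mincol0; lia. Qed.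

Lemma split_cost1 b : 0 < b -> split_cost 1 b = mincol b + b - 1.
Proof. by move=> b_gt0; rewrite /split_cost /absdiff mincol1; lia. Qed.

Lemma split_cost_double x y : split_cost x.*2 y.*2 = (split_cost x y).*2.
Proof. rewrite /split_cost !mincol_double /absdiff; lia. Qed.

Lemma split_cost_odd_even x y : 0 < x ->
  split_cost x.*2.+1 y.*2 = split_cost x.+1 y + split_cost x y + 1.
Proof. move=> x_gt0; rewrite /split_cost mincol_odd // mincol_double /absdiff; lia. Qed.

Lemma split_cost_odd_odd x y : 0 < x -> 0 < y ->
  split_cost x.*2.+1 y.*2.+1 = split_cost x.+1 y + split_cost x y.+1 + (x != y).*2.
Proof.
move=> x_gt0 y_gt0; rewrite /split_cost !mincol_odd // /absdiff.
case: eqVneq => [->|]; lia.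
Qed.

Lemma mincol_le_split_cost a b : mincol (a + b) <= split_cost a b.
Proof.
have [m] := ubnP (a + b); elim: m a b => // m IH a b /ltnSE hab.
wlog odd_ab : a b hab / odd b -> odd a.
  move=> wlog_ab; case/boolP: (odd b ==> odd a) => [/implyP|]; first exact: wlog_ab.
  rewrite negb_imply => /andP[b_odd _].
  by rewrite addnC split_costC; apply: wlog_ab; rewrite // addnC.
case: (posnP a) => [->|a_gt0]; first by rewrite add0n split_cost0; lia.
case: (posnP b) => [->|b_gt0]; first by rewrite addn0 split_costC split_cost0; lia.
case: (eqVneq a 1) => [->|a_neq1].
  by rewrite split_cost1 // add1n; have := mincol_succ b_gt0; lia.
case: (eqVneq b 1) => [->|b_neq1].
  by rewrite addn1 split_costC split_cost1 //; have := mincol_succ a_gt0; lia.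
have [x [a_even|a_odd]] := halfP a; have [y [b_even|b_odd]] := halfP b; subst a b.
- have := IH x y ltac:(lia).
  by rewrite -doubleD mincol_double split_cost_double leq_double.
- by move: odd_ab; rewrite /= !odd_double => /(_ isT).
- have x_gt0 : 0 < x by lia.
  have := IH x y ltac:(lia); have := IH x.+1 y ltac:(lia); rewrite addSn.
  rewrite (_ : x.*2.+1 + y.*2 = (x + y).*2.+1); last by rewrite doubleD addSn.
  rewrite mincol_odd ?addn_gt0 ?x_gt0 // split_cost_odd_even //; lia.
- have := IH x.+1 y ltac:(lia); have := IH x y.+1 ltac:(lia); rewrite addSn addnS.
  rewrite (_ : x.*2.+1 + y.*2.+1 = (x + y).+1.*2); last by rewrite doubleS doubleD; lia.
  rewrite mincol_double split_cost_odd_odd; lia.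
Qed.

Definition tight (a b : nat) : bool := mincol (a + b) == split_cost a b.

Lemma tightC a b : tight a b = tight b a.
Proof. by rewrite /tight addnC split_costC. Qed.

Lemma tight_double x y : tight x.*2 y.*2 = tight x y.
Proof. by rewrite /tight -doubleD mincol_double split_cost_double (inj_eq double_inj). Qed.

Lemma tight_odd_even x y :
  0 < x -> tight x.*2.+1 y.*2 -> tight x.+1 y && tight x y.
Proof.
move=> x_gt0; rewrite /tight (_ : x.*2.+1 + y.*2 = (x + y).*2.+1); last first.
  by rewrite doubleD addSn.
rewrite mincol_odd ?addn_gt0 ?x_gt0 // split_cost_odd_even // -addSn.
have := mincol_le_split_cost x.+1 y; have := mincol_le_split_cost x y.
move=> le_xy le_Sxy /eqP tight_xy; apply/andP; split; apply/eqP; lia.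
Qed.

Lemma tight_odd_odd x y : 0 < x -> 0 < y -> tight x.*2.+1 y.*2.+1 -> x = y.
Proof.
move=> x_gt0 y_gt0; rewrite /tight (_ : x.*2.+1 + y.*2.+1 = (x + y).+1.*2); last first.
  by rewrite doubleS doubleD; lia.
rewrite mincol_double split_cost_odd_odd //.
have := mincol_le_split_cost x.+1 y; have := mincol_le_split_cost x y.+1.
rewrite addSn addnS; case: eqVneq => //; lia.
Qed.

Lemma tight_1 b : 2 < b -> ~~ tight 1 b.
Proof.
move=> b_gt2; rewrite /tight split_cost1 ?add1n; last by lia.
by have := mincol_succ_strict b_gt2; lia.
Qed.

Lemma tight_odd a b : tight a b -> odd a -> odd b -> a = b.
Proof.
move=> + a_odd b_odd.
have [x a_eq] : exists x, a = x.*2.+1 by exists a./2; lia.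
have [y b_eq] : exists y, b = y.*2.+1 by exists b./2; lia.
subst a b; case: (posnP x) => [->|x_gt0]; case: (posnP y) => [->|y_gt0] //.
- by rewrite (negbTE (@tight_1 y.*2.+1 _)) //; lia.
- by rewrite tightC (negbTE (@tight_1 x.*2.+1 _)) //; lia.
- by move/(tight_odd_odd x_gt0 y_gt0) ->.
Qed.

(* Counting principle: each halving step adds at most one element. *)
Lemma uniq_size_sub_cons (T : eqType) (s t : seq T) (a : T) :
  uniq s -> {subset s <= a :: t} -> size s <= (size t).+1.
Proof. by move=> s_uniq s_sub; apply: uniq_leq_size s_uniq s_sub. Qed.

(* Parts x of s such that both (x, s - x) and (x + 1, s - x) are tight; the
   smaller parts of tight splits of 2s + 1 are encoded into this family. *)
Definition twin_tight (s : nat) : seq nat :=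
  [seq x <- iota 1 s.-1 | tight x (s - x) && tight x.+1 (s - x)].

Lemma mem_twin_tight s x :
  (x \in twin_tight s) = [&& 0 < x, x < s, tight x (s - x) & tight x.+1 (s - x)].
Proof.
rewrite mem_filter mem_iota.
by case: (tight _ _) (tight _ _) => [] [] /=; rewrite ?andbF //; apply/idP/idP; lia.
Qed.

Lemma twin_tight_sub s :
  {subset twin_tight s <= s./2 :: [seq u.*2 + odd s | u <- twin_tight s./2]}.
Proof.
move=> x; rewrite mem_twin_tight inE => /and4P[x_gt0 x_lt_s tight1 tight2].
have [u [x_eq|x_eq]] := halfP x; have [v [y_eq|y_eq]] := halfP (s - x);
  rewrite y_eq x_eq in tight1 tight2.
- have u_gt0 : 0 < u by lia.
  rewrite tight_double in tight1; have /andP[tight3 _] := tight_odd_even u_gt0 tight2.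
  apply/orP; right; apply/mapP; exists u; last by lia.
  by rewrite mem_twin_tight (_ : s./2 - u = v) ?tight1 ?tight3 ?andbT; lia.
- by have := tight_odd tight2 ltac:(lia) ltac:(lia); lia.
- rewrite -doubleS tight_double in tight2.
  case: (posnP u) => [u_eq0|u_gt0].
    have v_le1 : v <= 1.
      by case: leqP => // v_gt1; move: tight1; rewrite u_eq0 (negbTE (tight_1 _)) //; lia.
    by apply/orP; left; lia.
  have /andP[_ tight3] := tight_odd_even u_gt0 tight1.
  apply/orP; right; apply/mapP; exists u; last by lia.
  by rewrite mem_twin_tight (_ : s./2 - u = v) ?tight2 ?tight3 ?andbT; lia.
- by have := tight_odd tight1 ltac:(lia) ltac:(lia); lia.
Qed.

Lemma size_twin_tight s : size (twin_tight s) <= trunc_log 2 s.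
Proof.
elim/ltn_ind: s => s IH; case: (leqP s 1) => [|s_gt1]; first by case: s {IH} => [|[]].
have s_uniq : uniq (twin_tight s) by rewrite filter_uniq ?iota_uniq.
rewrite trunc_log2S //; apply: leq_trans (uniq_size_sub_cons s_uniq (@twin_tight_sub s)) _.
by rewrite size_map ltnS IH //; lia.
Qed.

Definition small_parts (n : nat) : seq nat := [seq b <- iota 1 n./2 | tight (n - b) b].

Lemma mem_small_parts n b :
  (b \in small_parts n) = [&& 0 < b, b <= n./2 & tight (n - b) b].
Proof.
rewrite mem_filter mem_iota andbC.
by case: (tight _ _); rewrite ?andbF //=; apply/idP/idP; lia.
Qed.

(* For even n = 2m: an even part is twice a part for m, an odd one is m. *)
Lemma small_parts_even_sub m :
  {subset small_parts m.*2 <= m :: [seq v.*2 | v <- small_parts m]}.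
Proof.
move=> b; rewrite mem_small_parts half_double inE => /and3P[b_gt0 b_le tight_b].
have [v [b_eq|b_eq]] := halfP b; subst b.
- rewrite (_ : m.*2 - v.*2 = (m - v).*2) ?tight_double in tight_b; last by lia.
  apply/orP; right; apply/mapP; exists v => //.
  by rewrite mem_small_parts tight_b andbT; lia.
- have := tight_odd tight_b ltac:(lia) ltac:(lia).
  by move=> eq_parts; apply/orP; left; apply/eqP; lia.
Qed.

Definition odd_code (s b : nat) : nat := if odd b then b./2 else s - b./2.

Lemma odd_code_sub s :
  {subset [seq odd_code s b | b <- small_parts s.*2.+1] <= 0 :: twin_tight s}.
Proof.
move=> x /mapP[b]; rewrite mem_small_parts /= uphalf_double.
move=> /and3P[b_gt0 b_le tight_b] ->.
rewrite inE /odd_code; have [v [b_eq|b_eq]] := halfP b; subst b.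
- rewrite odd_double half_double mem_twin_tight.
  rewrite (_ : s.*2.+1 - v.*2 = (s - v).*2.+1) in tight_b; last by lia.
  have sv_gt0 : 0 < s - v by lia.
  have /andP[tight1 tight2] := tight_odd_even sv_gt0 tight_b.
  by rewrite (_ : s - (s - v) = v) ?tight1 ?tight2 ?andbT; lia.
- rewrite /= odd_double /= uphalf_double mem_twin_tight.
  case: (posnP v) => [-> //|v_gt0].
  rewrite tightC (_ : s.*2.+1 - v.*2.+1 = (s - v).*2) in tight_b; last by lia.
  have /andP[tight1 tight2] := tight_odd_even v_gt0 tight_b.
  by rewrite tight1 tight2 andbT; lia.
Qed.

(* Odd parts are coded below s/2, even parts at or above it. *)
Lemma odd_code_inj s : {in small_parts s.*2.+1 &, injective (odd_code s)}.
Proof.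
move=> b1 b2; rewrite !mem_small_parts /= uphalf_double /odd_code.
by move=> /and3P[? ? _] /and3P[? ? _]; case: (boolP (odd b1)); case: (boolP (odd b2)); lia.
Qed.

Lemma size_small_parts n : size (small_parts n) <= trunc_log 2 n.
Proof.
elim/ltn_ind: n => n IH; case: (leqP n 1) => [|n_gt1]; first by case: n {IH} => [|[]].
rewrite trunc_log2S //.
have [m [n_eq|n_eq]] := halfP n; subst n; rewrite ?half_double /= ?uphalf_double.
- have parts_uniq : uniq (small_parts m.*2) by rewrite filter_uniq ?iota_uniq.
  apply: leq_trans (uniq_size_sub_cons parts_uniq (@small_parts_even_sub m)) _.
  by rewrite size_map ltnS IH //; lia.
- have code_uniq : uniq [seq odd_code m b | b <- small_parts m.*2.+1].
    by rewrite (map_inj_in_uniq (@odd_code_inj m)) filter_uniq ?iota_uniq.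
  rewrite -(size_map (odd_code m)).
  apply: leq_trans (uniq_size_sub_cons code_uniq (@odd_code_sub m)) _.
  by rewrite ltnS size_twin_tight.
Qed.

Lemma mincol_le_colless T : mincol (leaves T) <= colless T.
Proof.
elim: T => [//|a IHa b IHb] /=.
by apply: leq_trans (mincol_le_split_cost _ _) _; rewrite /split_cost; lia.
Qed.

Lemma mincol_attained n : 0 < n -> exists T, leaves T = n /\ colless T = mincol n.
Proof.
elim/ltn_ind: n => n IH n_gt0; case: (leqP n 1) => [n_le1|n_gt1].
  by exists Leaf; rewrite (_ : n = 1) //; lia.
have [Tu [leaves_u colless_u]] :=
  IH (uphalf n) ltac:(rewrite uphalf_half; lia) ltac:(rewrite uphalf_half; lia).
have [Td [leaves_d colless_d]] := IH n./2 ltac:(lia) ltac:(lia).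
exists (Node Tu Td).
rewrite /= leaves_u leaves_d colless_u colless_d (mincol_rec n_gt1) /absdiff.
by rewrite !uphalf_half; split; lia.
Qed.

Lemma cmin_mincol n : 0 < n -> cmin n = mincol n.
Proof.
case: n => [//|n] _; rewrite [cmin _]/=; case: ex_minnP => m; rewrite /colless_attained.
case: excluded_middle_informative => // [[T [leaves_T colless_T]]] _ m_min.
apply/eqP; rewrite eqn_leq -{2}colless_T -{2}leaves_T mincol_le_colless andbT.
apply: m_min; case: excluded_middle_informative => // no_tree.
by case: no_tree; exact: mincol_attained.
Qed.

Lemma mem_QB n (p : 'I_n.+1 * 'I_n.+1) : p \in QB n ->
  [/\ 0 < p.2, p.2 <= n./2, p.1 = n - p.2 :> nat & tight p.1 p.2].
Proof.
rewrite inE => /and4P[le21 p2_gt0 /eqP sum_n /eqP cost_n].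
have p1_eq : nat_of_ord p.1 = n - p.2 by lia.
split=> //; first lia.
rewrite /tight /split_cost sum_n -!cmin_mincol /absdiff; lia.
Qed.

Theorem corollary6 (n : nat) : 2 <= n -> #|QB n| <= trunc_log 2 n.
Proof.
move=> _; apply: leq_trans (size_small_parts n).
rewrite cardE -(size_map (fun p : 'I_n.+1 * 'I_n.+1 => val p.2)).
apply: uniq_leq_size.
  rewrite map_inj_in_uniq ?enum_uniq // => -[a1 b1] [a2 b2].
  rewrite !mem_enum => /mem_QB[_ _ /= a1_eq _] /mem_QB[_ _ /= a2_eq _] /= b_eq.
  by congr pair; apply: val_inj; rewrite //= a1_eq a2_eq b_eq.
move=> b /mapP[p]; rewrite mem_enum => /mem_QB[p2_gt0 p2_le p1_eq tight_p] ->.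
by rewrite mem_small_parts p2_gt0 p2_le -p1_eq.
Qed.
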